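(* $(\mathbb{S},\sigma)$ is not a final $F$-coalgebra in $\mathbf{Met_3}^{L}$.
   Context: A tripointed metric space is a set with three distinct points $T,L,R$ and a metric bounded by $1$ in which $T,L,R$ have pairwise distance $1$. $\mathbf{Met_3}^{L}$: tripointed metric spaces with Lipschitz maps preserving $T,L,R$. Let $M=\{a,b,c\}$. $M\times X$ has metric $\tfrac12d(x,y)$ within a copy and $1$ between copies; $M\otimes X$ is the quotient metric space by the equivalence relation generated by $(b,T)\sim(a,L)$, $(a,R)\sim(c,T)$, $(c,L)\sim(b,R)$, with elements $m\otimes x$ and distinguished points $a\otimes T,b\otimes L,c\otimes R$; $F=M\otimes-$ with $(M\otimes f)(m\otimes x)=m\otimes f(x)$. The Sierpinski gasket $\mathbb{S}\subset\mathbb{R}^2$ is the unique nonempty compact set with $\mathbb{S}=\sigma_a(\mathbb{S})\cup\sigma_b(\mathbb{S})\cup\sigma_c(\mathbb{S})$, where $\sigma_a(x,y)=(x/2,y/2)+(1/4,\sqrt3/4)$, $\sigma_b(x,y)=(x/2,y/2)$, $\sigma_c(x,y)=(x/2,y/2)+(1/2,0)$, with the Euclidean metric and distinguished points $T=(1/2,\sqrt3/2)$, $L=(0,0)$, $R=(1,0)$. The map $\tau\colon M\otimes\mathbb{S}\to\mathbb{S}$, $\tau(m\otimes x)=\sigma_m(x)$, is a bijection preserving distinguished points, and $\sigma=\tau^{-1}$; $\sigma$ is a morphism in $\mathbf{Met_3}^{L}$, so $(\mathbb{S},\sigma)$ is an $F$-coalgebra there. *)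

From Stdlib Require Import Reals List Relations.
From mathcomp Require Import all_boot all_classical all_reals all_analysis.
From mathcomp Require Import Rstruct Rstruct_topology.




Local Open Scope R_scope.

Record M3data : Type := Build_M3data {
  mcar :> Type;
  mdist : mcar -> mcar -> R;
  mT : mcar; mL : mcar; mR : mcar }.
Arguments mdist : clear implicits.
Arguments mT : clear implicits.
Arguments mL : clear implicits.
Arguments mR : clear implicits.

Definition isMet3 (X : M3data) : Prop :=
  (forall x y : X, mdist X x y = 0 <-> x = y) /\
  (forall x y : X, mdist X x y = mdist X y x) /\
  (forall x y z : X, mdist X x z <= mdist X x y + mdist X y z) /\
  (forall x y : X, mdist X x y <= 1) /\
  mdist X (mT X) (mL X) = 1 /\ mdist X (mT X) (mR X) = 1 /\
  mdist X (mL X) (mR X) = 1.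

Definition lipschitz (A B : Type) (dA : A -> A -> R) (dB : B -> B -> R)
  (f : A -> B) : Prop :=
  exists K : R, 0 <= K /\ forall x y, dB (f x) (f y) <= K * dA x y.

Definition met3_morph (X Y : M3data) (f : X -> Y) : Prop :=
  lipschitz X Y (mdist X) (mdist Y) f /\
  f (mT X) = mT Y /\ f (mL X) = mL Y /\ f (mR X) = mR Y.

Inductive Mlab : Type := ma | mb | mc.

Definition Mlab_eq_dec (m n : Mlab) : {m = n} + {m <> n}.
Proof. decide equality. Defined.

Definition dprod (X : M3data) (p q : Mlab * X) : R :=
  if Mlab_eq_dec (fst p) (fst q) then / 2 * mdist X (snd p) (snd q) else 1.

Inductive glue0 (X : M3data) : Mlab * X -> Mlab * X -> Prop :=
  | glueBT_AL : glue0 X (mb, mT X) (ma, mL X)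
  | glueAR_CT : glue0 X (ma, mR X) (mc, mT X)
  | glueCL_BR : glue0 X (mc, mL X) (mb, mR X).

Definition teq (X : M3data) : Mlab * X -> Mlab * X -> Prop :=
  clos_refl_sym_trans _ (glue0 X).

Definition tens (X : M3data) : Type :=
  { S : Mlab * X -> Prop | exists p, S = teq X p }.

Definition tpt (X : M3data) (m : Mlab) (x : X) : tens X :=
  exist _ (teq X (m, x)) (ex_intro _ (m, x) erefl).

(* chains  (p_1,q_1),...,(p_n,q_n)  with p_1 ~ a, q_i ~ p_{i+1}, q_n ~ b *)
Fixpoint walk (X : M3data) (a b : Mlab * X)
  (l : list ((Mlab * X) * (Mlab * X))) : Prop :=
  match l with
  | nil => False
  | (p, q) :: l' =>
      teq X a p /\
      match l' with
      | nil => teq X q b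
      | _ => walk X q b l'
      end
  end.

Definition chain_cost (X : M3data) (l : list ((Mlab * X) * (Mlab * X))) : R :=
  fold_right (fun pq acc => dprod X (fst pq) (snd pq) + acc) 0 l.

Definition tdist (X : M3data) (A B : tens X) : R :=
  inf [set r | exists a b l, proj1_sig A a /\ proj1_sig B b /\
                  walk X a b l /\ r = chain_cost X l].

Definition Fmap (X Y : M3data) (f : X -> Y) (A : tens X) : tens Y :=
  let p := proj1_sig (cid (proj2_sig A)) in tpt Y (fst p) (f (snd p)).

Definition is_coalg (X : M3data) (e : X -> tens X) : Prop :=
  isMet3 X /\ lipschitz X (tens X) (mdist X) (tdist X) e /\
  e (mT X) = tpt X ma (mT X) /\ e (mL X) = tpt X mb (mL X) /\
  e (mR X) = tpt X mc (mR X).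

Definition coalg_hom (Y : M3data) (g : Y -> tens Y)
  (X : M3data) (e : X -> tens X) (h : Y -> X) : Prop :=
  met3_morph Y X h /\ forall y, e (h y) = Fmap Y X h (g y).

Definition final_coalg (X : M3data) (e : X -> tens X) : Prop :=
  forall (Y : M3data) (g : Y -> tens Y), is_coalg Y g ->
    exists h : Y -> X, coalg_hom Y g X e h /\
      forall h' : Y -> X, coalg_hom Y g X e h' -> h' = h.

Definition sier_map (m : Mlab) (p : R * R) : R * R :=
  match m with
  | ma => (fst p / 2 + / 4, snd p / 2 + sqrt 3 / 4)
  | mb => (fst p / 2, snd p / 2)
  | mc => (fst p / 2 + / 2, snd p / 2)
  end.

Definition ifs_invariant (K : set (R * R)) : Prop :=
  forall p, K p <-> exists m q, K q /\ p = sier_map m q.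

(* the unique nonempty compact invariant set (Hutchinson), described as the
   intersection of all nonempty compact invariant sets *)
Definition inS (p : R * R) : Prop :=
  forall K : set (R * R), compact K -> (exists q, K q) -> ifs_invariant K -> K p.

Definition Sg : Type := { p : R * R | inS p }.

Definition eucl (s t : Sg) : R :=
  sqrt ((fst (proj1_sig s) - fst (proj1_sig t)) ^ 2 +
        (snd (proj1_sig s) - snd (proj1_sig t)) ^ 2).

Definition SG (T L Rt : Sg) : M3data := Build_M3data Sg eucl T L Rt.

(* A final coalgebra receives a coalgebra morphism from every coalgebra; we
   exhibit one from which no Lipschitz morphism into (S, sigma) exists.  Take
   Y = {T, L, y_0 = R, y_1, y_2, ...} with y_n at distance 4^-n from L along a
   line and T at distance 1 from everything, and the coalgebra structure
   T |-> a(x)T, L |-> b(x)L, R |-> c(x)R, y_(n+1) |-> b(x)y_n, which is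
   2-Lipschitz.  A coalgebra morphism h : Y -> S must satisfy
   sigma (h y_(n+1)) = b(x)h(y_n); since every point of S is sigma_m of a point
   of S (self-similarity of the attractor, proved via the Hutchinson iterates
   of the unit square) and glued representatives have the same image under
   tau, this forces h y_n = sigma_b^n (1, 0) = (2^-n, 0).  Then
   d(h y_n, h L) = 2^-n while d(y_n, L) = 4^-n, so h is not Lipschitz. *)

From Pilot Require Import Defs.
From Stdlib Require Import Reals Lra Relations Classical.
From mathcomp Require Import all_boot all_algebra all_classical all_reals all_analysis.
From mathcomp Require Import Rstruct Rstruct_topology.
Local Open Scope classical_set_scope.
Local Open Scope R_scope.

Lemma Rabs_half (x : R) : Rabs (x / 2) = Rabs x / 2.
Proof. by rewrite /Rdiv Rabs_mult (Rabs_right (/ 2)) //; lra. Qed.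

Lemma sier_map_sub m p q :
  (sier_map m p).1 - (sier_map m q).1 = (p.1 - q.1) / 2 /\
  (sier_map m p).2 - (sier_map m q).2 = (p.2 - q.2) / 2.
Proof. by case: m; split => /=; field. Qed.

Lemma sier_map_inj m : injective (sier_map m).
Proof.
by move=> [p1 p2] [q1 q2]; case: m => /= [[h1 h2]|[h1 h2]|[h1 h2]]; congr pair; lra.
Qed.

Lemma ball_R (x y e : R) : ball x e y <-> Rabs (x - y) < e.
Proof. by rewrite /ball /= -RabsE; split => /RltP. Qed.

Lemma ball_RR (x y : R * R) e :
  ball x e y <-> Rabs (x.1 - y.1) < e /\ Rabs (x.2 - y.2) < e.
Proof. by split => [[/ball_R ? /ball_R ?]|[? ?]]; split => //; apply/ball_R. Qed.

Lemma RR_hausdorff : hausdorff_space (R * R)%type.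
Proof. exact: (@norm_hausdorff _ (R^o * R^o)%type). Qed.

Lemma sier_map_continuous m : continuous (sier_map m).
Proof.
move=> p; apply/cvg_ballP => e he.
apply: filterS (nbhsx_ballx p e he) => q /ball_RR [h1 h2].
apply/ball_RR; have [-> ->] := sier_map_sub m p q; rewrite !Rabs_half.
move: (Rabs_pos (p.1 - q.1)) (Rabs_pos (p.2 - q.2)) h1 h2.
by case: p q => [p1 p2] [q1 q2] /=; split; lra.
Qed.

Definition unit_square : set (R * R) := `[(0:R)%R, (1:R)%R] `*` `[(0:R)%R, (1:R)%R].

Lemma unit_squareP p : unit_square p <-> 0 <= p.1 <= 1 /\ 0 <= p.2 <= 1.
Proof.
rewrite /unit_square /setX /= !in_itv /=.
by split => [[/andP [/RleP ? /RleP ?] /andP [/RleP ? /RleP ?]]|[[? ?] [? ?]]];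
  split => //; apply/andP; split; apply/RleP.
Qed.

Lemma sqrt3_bounds : 1 < sqrt 3 < 2.
Proof.
have -> : 2 = sqrt (2 ^ 2) by rewrite sqrt_pow2; lra.
by rewrite -sqrt_1; split; apply: sqrt_lt_1_alt; lra.
Qed.

Lemma sier_map_unit_square m p : unit_square p -> unit_square (sier_map m p).
Proof.
move/unit_squareP => [[? ?] [? ?]]; apply/unit_squareP.
by have := sqrt3_bounds; case: m => /=; lra.
Qed.

Fixpoint sier_iter (n : nat) : set (R * R) :=
  if n is n'.+1 then
    sier_map ma @` sier_iter n' `|` sier_map mb @` sier_iter n' `|`
    sier_map mc @` sier_iter n'
  else unit_square.

Lemma sier_iterS n p :
  sier_iter n.+1 p <-> exists m q, sier_iter n q /\ p = sier_map m q.
Proof.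
split => [[[[q hq <-]|[q hq <-]]|[q hq <-]]|[[] [q [hq ->]]]].
- by exists ma, q.
- by exists mb, q.
- by exists mc, q.
- by left; left; exists q.
- by left; right; exists q.
- by right; exists q.
Qed.

Lemma sier_iter_compact n : compact (sier_iter n).
Proof.
elim: n => [|n IH] /=; first by apply: compact_setX; exact: segment_compact.
have cim m : compact (sier_map m @` sier_iter n).
  by apply: continuous_compact => //; apply: continuous_subspaceT;
    exact: sier_map_continuous.
by repeat apply: compactU.
Qed.

Lemma sier_iter_unit_square n : sier_iter n `<=` unit_square.
Proof.
elim: n => [//|n IH] p /sier_iterS [m [q [/IH hq ->]]].
exact: sier_map_unit_square.
Qed.

Lemma sier_iter_succ n : sier_iter n.+1 `<=` sier_iter n.
Proof.
elim: n => [|n IH] p; first exact: sier_iter_unit_square.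
move/sier_iterS => [m [q [/IH hq ->]]]; apply/sier_iterS; by exists m, q.
Qed.

Lemma sier_iter_le n N : (n <= N)%N -> sier_iter N `<=` sier_iter n.
Proof.
move/subnK <-; elim: (N - n)%N => [//|k IH] p /sier_iter_succ.
exact: IH.
Qed.

Definition gasket : set (R * R) := \bigcap_(n in [set: nat]) sier_iter n.

Lemma gasket_compact : compact gasket.
Proof.
apply: (subclosed_compact _ (sier_iter_compact 0)); last by move=> p /(_ 0%N I).
apply: closed_bigI => n _.
exact: compact_closed RR_hausdorff (sier_iter_compact n).
Qed.

Lemma gasket_sier_map m q : gasket q -> gasket (sier_map m q).
Proof.
move=> hq n _; apply: sier_iter_succ; apply/sier_iterS.
by exists m, q; split => //; exact: hq.
Qed.

Lemma gasket_decomp p : gasket p -> exists m q, gasket q /\ p = sier_map m q.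
Proof.
move=> hp.
pose below m n := exists q, sier_iter n q /\ p = sier_map m q.
suff [m hm] : exists m, forall n, below m n.
  have [q0 [_ e0]] := hm 0%N; exists m, q0; split => // n _.
  have [q [hq e]] := hm n; by rewrite (sier_map_inj m q0 q) // -e0.
(* Some label works at every level: the levels are nested and there are only
   three labels. *)
apply: NNPP => none.
have miss m : exists n, ~ below m n.
  by apply: not_all_ex_not => hm; apply: none; exists m.
have [[na ha] [nb hb] [nc hc]] := And3 (miss ma) (miss mb) (miss mc).
have /sier_iterS [m [q [hq e]]] := hp (na + nb + nc).+1 I.
have le_q n : (n <= na + nb + nc)%N -> below m n.
  by move=> le; exists q; split => //; exact: sier_iter_le le _ hq.
case: m le_q e => le_q _.
- by apply: ha; apply: le_q; rewrite -addnA leq_addr.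
- by apply: hb; apply: le_q; rewrite addnAC leq_addl.
- by apply: hc; apply: le_q; rewrite leq_addl.
Qed.

Lemma pow_half_lt (C e : R) : 0 < e -> exists n, C * (/ 2) ^ n < e.
Proof.
move=> e_gt0.
have eC_gt0 : 0 < e / (Rabs C + 1).
  by apply: Rdiv_lt_0_compat; have := Rabs_pos C; lra.
have half_lt1 : Rabs (/ 2) < 1 by rewrite Rabs_right; lra.
have [n /(_ n (le_n n))] := pow_lt_1_zero (/ 2) half_lt1 _ eC_gt0.
rewrite Rabs_right; last by apply: Rle_ge; apply: pow_le; lra.
move=> small; exists n.
have t_gt0 : 0 < (/ 2) ^ n by apply: pow_lt; lra.
have : (Rabs C + 1) * (/ 2) ^ n < e.
  have -> : e = (Rabs C + 1) * (e / (Rabs C + 1)) by field; have := Rabs_pos C; lra.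
  by apply: Rmult_lt_compat_l => //; have := Rabs_pos C; lra.
have := Rle_abs C; nra.
Qed.

Section InvariantSets.

Variable K : set (R * R).
Hypothesis K_inv : ifs_invariant K.

Lemma sier_iter_near_invariant {q} : K q -> forall n p, sier_iter n p ->
  exists k, K k /\
    Rabs (p.1 - k.1) <= (1 + Rabs q.1 + Rabs q.2) * (/ 2) ^ n /\
    Rabs (p.2 - k.2) <= (1 + Rabs q.1 + Rabs q.2) * (/ 2) ^ n.
Proof.
move=> Kq; elim=> [|n IH] p.
  move/unit_squareP => [[? ?] [? ?]]; exists q; split => //=.
  have := Rle_abs q.1; have := Rle_abs q.2.
  have := Rle_abs (- q.1); have := Rle_abs (- q.2); rewrite !Rabs_Ropp.
  by split; rewrite Rmult_1_r; apply: Rabs_le; lra.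
move/sier_iterS => [m [p' [hp' ->]]].
have [k [Kk [d1 d2]]] := IH p' hp'.
exists (sier_map m k); split; first by apply/K_inv; exists m, k.
have [-> ->] := sier_map_sub m p' k; rewrite !Rabs_half /=.
by split; lra.
Qed.

Lemma gasket_sub_invariant : compact K -> (exists q, K q) -> gasket `<=` K.
Proof.
move=> cK [q Kq] p hp.
apply: (compact_closed RR_hausdorff cK) => B /nbhs_ballP [e /RltP e_gt0 sub].
have [n small] := pow_half_lt (1 + Rabs q.1 + Rabs q.2) e e_gt0.
have [k [Kk [d1 d2]]] := sier_iter_near_invariant Kq n p (hp n I).
by exists k; split => //; apply: sub; apply/ball_RR; split; lra.
Qed.

End InvariantSets.

Lemma gasket_invariant : ifs_invariant gasket.
Proof.
move=> p; split; first exact: gasket_decomp.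
by move=> [m [q [hq ->]]]; exact: gasket_sier_map.
Qed.

Lemma inS_gasket p : inS p <-> gasket p.
Proof.
split=> [|hp K cK K_ne K_inv]; last exact: gasket_sub_invariant.
apply; [exact: gasket_compact| |exact: gasket_invariant].
exists (0, 0) => n _; elim: n => [|n IH]; first by apply/unit_squareP => /=; lra.
by apply/sier_iterS; exists mb, (0, 0); split => //=; congr pair; lra.
Qed.

Lemma inS_decomp p : inS p -> exists m q, inS q /\ p = sier_map m q.
Proof.
move/inS_gasket/gasket_decomp => [m [q [hq ->]]].
by exists m, q; split => //; apply/inS_gasket.
Qed.

Lemma tpt_eq (X : M3data) u v : teq X u v -> tpt X u.1 u.2 = tpt X v.1 v.2.
Proof.
case: u v => m x [m' x'] /= uv; apply: eq_exist.
apply: funext => w; apply: propext; split.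
- exact: rst_trans (rst_sym _ _ _ _ uv).
- exact: rst_trans uv.
Qed.

Lemma tpt_inj (X : M3data) m x m' x' :
  tpt X m x = tpt X m' x' -> teq X (m, x) (m', x').
Proof. by move=> /(f_equal (@proj1_sig _ _)) /= ->; exact: rst_refl. Qed.

Section PointedMaps.

Variables (X Y : M3data) (f : X -> Y).
Hypotheses (fT : f (mT X) = mT Y) (fL : f (mL X) = mL Y) (fR : f (mR X) = mR Y).

Lemma teq_map u v : teq X u v -> teq Y (u.1, f u.2) (v.1, f v.2).
Proof.
elim=> {u v} [u v []|u|u v _ IH|u v w _ IH1 _ IH2];
  try by rewrite /= ?fT ?fL ?fR; apply: rst_step; constructor.
- exact: rst_refl.
- exact: rst_sym.
- exact: rst_trans IH1 IH2.
Qed.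

Lemma Fmap_tpt m x : Fmap X Y f (tpt X m x) = tpt Y m (f x).
Proof.
rewrite /Fmap; case: (cid _) => p /= hp.
have /teq_map xp : teq X (m, x) p by rewrite hp; exact: rst_refl.
exact: tpt_eq (rst_sym _ _ _ _ xp).
Qed.

End PointedMaps.

Lemma mdist_ge0 (X : M3data) : isMet3 X -> forall x y : X, 0 <= Defs.mdist X x y.
Proof.
move=> [d0 [dsym [dtri _]]] x y.
have := dtri x y x; rewrite (dsym y x) (proj2 (d0 x x) erefl); lra.
Qed.

Lemma tdist_le_dprod (X : M3data) : isMet3 X -> forall m x m' x',
  tdist X (tpt X m x) (tpt X m' x') <= dprod X (m, x) (m', x').
Proof.
move=> metX m x m' x'.
have dprod_ge0 p q : 0 <= dprod X p q.
  rewrite /dprod; case: (Mlab_eq_dec p.1 q.1) => _ /=; last lra.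
  have := mdist_ge0 _ metX p.2 q.2; lra.
have cost_ge0 l : 0 <= chain_cost X l.
  by elim: l => [|pq l IH] /=; [lra|have := dprod_ge0 pq.1 pq.2; lra].
rewrite -[dprod _ _ _]Rplus_0_r; apply/RleP; apply: ge_inf.
  by exists 0 => r [a [b [l [_ [_ [_ ->]]]]]]; apply/RleP.
exists (m, x), (m', x'), [:: ((m, x), (m', x'))].
by do !split => //; exact: rst_refl.
Qed.

Inductive Ypt : Type := YT | YL | Yn of nat.

Definition ypos (x : Ypt) : R := if x is Yn n then (/ 4) ^ n else 0.

Definition ydist (x y : Ypt) : R :=
  match x, y with
  | YT, YT => 0
  | YT, _ | _, YT => 1
  | _, _ => Rabs (ypos x - ypos y)
  end.

Definition Ydata : M3data := Build_M3data Ypt ydist YT YL (Yn 0).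

Lemma pow_quarter_bounds n : 0 < (/ 4) ^ n <= 1.
Proof.
split; first by apply: pow_lt; lra.
by rewrite -(pow1 n); apply: pow_incr; lra.
Qed.

Lemma pow_quarter_inj : injective (fun n => (/ 4) ^ n).
Proof.
have lt_pow n m : (n < m)%coq_nat -> (/ 4) ^ m < (/ 4) ^ n.
  move=> nm; rewrite !pow_inv; apply: Rinv_lt_contravar.
    by apply: Rmult_lt_0_compat; apply: pow_lt; lra.
  by apply: Rlt_pow => //; lra.
move=> n m /= e; case: (PeanoNat.Nat.lt_total n m) => [nm|[//|mn]].
- by have := lt_pow _ _ nm; lra.
- by have := lt_pow _ _ mn; lra.
Qed.

Lemma ydist_ge0 x y : 0 <= ydist x y.
Proof. by case: x => [||n]; case: y => [||k] /=; try lra; exact: Rabs_pos. Qed.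

Lemma ydist_le1 x y : ydist x y <= 1.
Proof.
case: x => [||n]; case: y => [||k] /=; try lra.
all: apply: Rabs_le; (try have := pow_quarter_bounds n);
  (try have := pow_quarter_bounds k); simpl; lra.
Qed.

Lemma ydist_eq0 x y : ydist x y = 0 <-> x = y.
Proof.
split=> [|<-]; last by case: x => [||n] //=; rewrite Rminus_diag Rabs_R0.
case: x => [||n]; case: y => [||k] //=; try lra.
all: move/Rnorm0_eq0/Rminus_diag_uniq.
all: (try have := pow_quarter_bounds n); (try have := pow_quarter_bounds k); try lra.
by move=> _ _ /pow_quarter_inj ->.
Qed.

Lemma ydist_sym x y : ydist x y = ydist y x.
Proof. by case: x => [||n]; case: y => [||k] //=; exact: Rabs_minus_sym. Qed.

Lemma ydist_triangle x y z : ydist x z <= ydist x y + ydist y z.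
Proof.
have tri a b c := Rdist_tri a c b; rewrite /Rdist in tri.
move: (ydist_le1 x z) (ydist_ge0 x y) (ydist_ge0 y z) (ydist_ge0 x z).
by case: x => [||n]; case: y => [||k]; case: z => [||j] /= *; first [lra|exact: tri].
Qed.

Lemma Ydata_met3 : isMet3 Ydata.
Proof.
split; first exact: ydist_eq0.
split; first exact: ydist_sym.
split; first exact: ydist_triangle.
split; first exact: ydist_le1.
by do !split => //=; rewrite Rminus_0_l Rabs_Ropp Rabs_R1.
Qed.

Definition ylab (x : Ypt) : Mlab :=
  match x with YT => ma | YL => mb | Yn 0 => mc | Yn _.+1 => mb end.

Definition yprev (x : Ypt) : Ypt := if x is Yn n.+1 then Yn n else x.

Definition ystep (x : Ydata) : tens Ydata := tpt Ydata (ylab x) (yprev x).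

Lemma ystep_lipschitz : Defs.lipschitz Ydata (tens Ydata) ydist (tdist Ydata) ystep.
Proof.
exists 2; split => [|x y]; first lra.
apply: Rle_trans (tdist_le_dprod _ Ydata_met3 _ _ _ _) _.
have shift a b c d : c = / 4 * a -> d = / 4 * b ->
    / 2 * Rabs (a - b) <= 2 * Rabs (c - d).
  move=> -> ->; rewrite -Rmult_minus_distr_l Rabs_mult (Rabs_right (/ 4)); lra.
have far u : u <= - / 2 \/ / 2 <= u -> 1 <= 2 * Rabs u.
  by case=> ?; [rewrite Rabs_left|rewrite Rabs_right]; lra.
case: x => [||[|n]]; case: y => [||[|k]]; rewrite /dprod /=.
all: first [lra | (rewrite Rminus_diag Rabs_R0; lra) | (apply: shift; ring)
  | (apply: far; (try have := pow_quarter_bounds n);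
     (try have := pow_quarter_bounds k); lra)].
Qed.

Lemma ystep_coalg : is_coalg Ydata ystep.
Proof. by split; [exact: Ydata_met3|split; [exact: ystep_lipschitz|]]. Qed.

Section GasketCoalgebra.

Variables (T L Rt : Sg) (sig : Sg -> tens (SG T L Rt)).
Hypotheses (T_def : proj1_sig T = (/ 2, sqrt 3 / 2)) (L_def : proj1_sig L = (0, 0))
  (Rt_def : proj1_sig Rt = (1, 0)).
Hypothesis sig_sier_map : forall (s x : Sg) (m : Mlab),
  proj1_sig s = sier_map m (proj1_sig x) -> sig s = tpt (SG T L Rt) m x.

Lemma teq_sier_map u v : teq (SG T L Rt) u v ->
  sier_map u.1 (proj1_sig u.2) = sier_map v.1 (proj1_sig v.2).
Proof.
elim=> {u v} [u v []|//|u v _ -> //|u v w _ -> _ -> //].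
all: by rewrite /= ?T_def ?L_def ?Rt_def /=; congr pair; field.
Qed.

Lemma sig_tpt_sier_map s m x :
  sig s = tpt (SG T L Rt) m x -> proj1_sig s = sier_map m (proj1_sig x).
Proof.
have [m' [q [Sq e]]] := inS_decomp _ (proj2_sig s).
rewrite (sig_sier_map s (exist _ q Sq) m' e) => /tpt_inj /teq_sier_map.
by rewrite e.
Qed.

Lemma coalg_hom_Yn h : coalg_hom Ydata ystep (SG T L Rt) sig h ->
  forall n, proj1_sig (h (Yn n)) = ((/ 2) ^ n, 0).
Proof.
move=> [[_ [hT [hL hR]]] h_comm]; elim=> [|n IH]; first by rewrite /= hR Rt_def.
move: (h_comm (Yn n.+1)); rewrite /ystep /= Fmap_tpt // => /sig_tpt_sier_map ->.
by rewrite IH /=; congr pair; field.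
Qed.

Lemma no_coalg_hom_from_Ydata h : ~ coalg_hom Ydata ystep (SG T L Rt) sig h.
Proof.
move=> hom; have [[[K [_ h_lip]] [_ [hL _]]] _] := hom.
have [n small] := pow_half_lt K 1 Rlt_0_1.
have t_gt0 : 0 < (/ 2) ^ n by apply: pow_lt; lra.
have := h_lip (Yn n) YL.
rewrite /= /eucl coalg_hom_Yn //; change (h (mL Ydata)) with (h YL) in hL.
rewrite hL L_def /= !Rminus_0_r Rmult_0_l Rplus_0_r Rmult_1_r sqrt_square; last lra.
rewrite Rabs_right; last by have := pow_quarter_bounds n; lra.
rewrite (_ : / 4 = / 2 * / 2); last field.
rewrite Rpow_mult_distr; nra.
Qed.

End GasketCoalgebra.

Theorem mainTheorem13 (T L Rt : Sg) (sig : Sg -> tens (SG T L Rt)) :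
  proj1_sig T = (/ 2, sqrt 3 / 2) ->
  proj1_sig L = (0, 0) ->
  proj1_sig Rt = (1, 0) ->
  (* sig = tau^{-1}, i.e. sig (sigma_m x) = m (x) x *)
  (forall (s x : Sg) (m : Mlab),
      proj1_sig s = sier_map m (proj1_sig x) -> sig s = tpt (SG T L Rt) m x) ->
  ~ final_coalg (SG T L Rt) sig.
Proof.
move=> T_def L_def Rt_def sig_sier_map final.
have [h [hom _]] := final Ydata ystep ystep_coalg.
exact: no_coalg_hom_from_Ydata T_def L_def Rt_def sig_sier_map h hom.
Qed.
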